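(* Let $(\mathrm{G},\mu)$ be a Lorentzian flat Lie group. Then $\mathrm{G}$ admits a timelike left-invariant Killing vector field (for $\mu$) if and only if $\mathrm{G}$ admits a left-invariant Riemannian metric whose Levi-Civita connection coincides with the Levi-Civita connection of $\mu$.
   Context: A Lorentzian flat Lie group is a connected Lie group $\mathrm{G}$ endowed with a left-invariant flat pseudo-Riemannian metric $\mu$ of signature $(-,+,\dots,+)$. A vector field $X$ is timelike if $\mu(X,X)<0$ everywhere, and Killing if the flow of $X$ preserves $\mu$. *)

(* Lie-algebra level model of left-invariant geometry on a
   Lie group G of dimension n: left-invariant vector fields = Lie algebra
   g = 'rV[R]_n, left-invariant metrics = inner products on g. *)
From HB Require Import structures.
From mathcomp Require Import all_boot all_order all_algebra.
From mathcomp Require Import all_classical all_reals.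
Set Implicit Arguments. Unset Strict Implicit. Unset Printing Implicit Defensive.
Import Order.TTheory GRing.Theory Num.Theory.
Local Open Scope ring_scope.

Section Defs.
Variables (R : realType) (n : nat).
Notation vec := 'rV[R]_n.

Definition bform (M : 'M[R]_n) (u v : vec) : R := (u *m M *m v^T) 0 0.

Definition bilinear_map (f : vec -> vec -> vec) : Prop :=
  (forall (a : R) u v w, f (a *: u + v) w = a *: f u w + f v w) /\
  (forall (a : R) u v w, f u (a *: v + w) = a *: f u v + f u w).

Definition lie_bracket (br : vec -> vec -> vec) : Prop :=
  [/\ bilinear_map br,
      (forall u, br u u = 0) &
      (forall u v w, br u (br v w) + br v (br w u) + br w (br u v) = 0)].

Definition lorentzian (M : 'M[R]_n) : Prop :=
  [/\ (0 < n)%N, M^T = M &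
      exists P : 'M[R]_n, P \in unitmx /\
        P *m M *m P^T = diag_mx (\row_(i < n) (if val i == 0%N then -1 else 1))].

Definition riemannian (S : 'M[R]_n) : Prop :=
  S^T = S /\ forall u : vec, u != 0 -> 0 < bform S u u.

(* prod is the Levi-Civita product of the metric M on the Lie algebra
   (br): nabla_{u+} v+ = (prod u v)+ for left-invariant fields,
   characterized by the Koszul formula *)
Definition levi_civita (M : 'M[R]_n) (br : vec -> vec -> vec)
  (prod : vec -> vec -> vec) : Prop :=
  forall u v w, 2 * bform M (prod u v) w =
    bform M (br u v) w - bform M (br v w) u + bform M (br w u) v.

Definition flat_product (br prod : vec -> vec -> vec) : Prop :=
  forall u v w, prod u (prod v w) - prod v (prod u w) = prod (br u v) w.

(* a left-invariant vector field X is Killing iff its flow (right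
   translations by exp tX) is isometric, i.e. ad_X is M-skew *)
Definition killing (M : 'M[R]_n) (br : vec -> vec -> vec) (X : vec) : Prop :=
  forall u v, bform M (br X u) v + bform M u (br X v) = 0.

Definition timelike (M : 'M[R]_n) (X : vec) : Prop := bform M X X < 0.

End Defs.

From HB Require Import structures.
From mathcomp Require Import all_boot all_order all_algebra.
From mathcomp Require Import all_classical all_reals.
From mathcomp Require Import polyrcf.
From mathcomp Require Import ring lra.
Import Order.TTheory GRing.Theory Num.Theory.
Local Open Scope ring_scope.
Set Implicit Arguments. Unset Strict Implicit.

(* A timelike Killing field [X] of a flat Lorentzian metric [M] is parallel:
   its Hessian [nabla^2 X] is symmetric by flatness and skew in its last two
   arguments because [nabla X] is [M]-skew, hence zero; then each [nabla_v X]
   is [M]-orthogonal to the timelike [X] and null, hence zero.  Reflecting [M]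
   along the parallel field [X], [S := M - 2 X' X' / M(X,X)] with [X' = M X],
   is a parallel Riemannian metric, whose Levi-Civita connection is [nabla].
   Conversely, if a Riemannian [S] is [nabla]-parallel, then since
   [det M < 0 < det S] some [e <> 0] satisfies [M e = - c S e] with [c > 0];
   [e] is timelike, and [nabla_u e] is [M]-orthogonal to [e] with
   [M(nabla_u e, nabla_u e) = - c S(nabla_u e, nabla_u e) <= 0], so [e] is
   parallel, and parallel fields are Killing. *)

Section BilinearForm.
Variables (R : realType) (n : nat).
Local Notation vec := 'rV[R]_n.
Implicit Types (N : 'M[R]_n) (u v w : vec).

Lemma bformDl N u1 u2 v : bform N (u1 + u2) v = bform N u1 v + bform N u2 v.
Proof. by rewrite /bform !mulmxDl mxE. Qed.

Lemma bformZl N a u v : bform N (a *: u) v = a * bform N u v.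
Proof. by rewrite /bform -!scalemxAl mxE. Qed.

Lemma bformNl N u v : bform N (- u) v = - bform N u v.
Proof. by rewrite -scaleN1r bformZl mulN1r. Qed.

Lemma bformBl N u1 u2 v : bform N (u1 - u2) v = bform N u1 v - bform N u2 v.
Proof. by rewrite bformDl bformNl. Qed.

Lemma bform0l N v : bform N 0 v = 0.
Proof. by rewrite /bform !mul0mx mxE. Qed.

Lemma bformDr N u v1 v2 : bform N u (v1 + v2) = bform N u v1 + bform N u v2.
Proof. by rewrite /bform linearD /= mulmxDr mxE. Qed.

Lemma bformZr N a u v : bform N u (a *: v) = a * bform N u v.
Proof. by rewrite /bform linearZ /= -scalemxAr mxE. Qed.

Lemma bformNr N u v : bform N u (- v) = - bform N u v.
Proof. by rewrite -scaleN1r bformZr mulN1r. Qed.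

Lemma bformBr N u v1 v2 : bform N u (v1 - v2) = bform N u v1 - bform N u v2.
Proof. by rewrite bformDr bformNr. Qed.

Lemma bform0r N u : bform N u 0 = 0.
Proof. by rewrite /bform trmx0 mulmx0 mxE. Qed.

Lemma bformDm N1 N2 u v : bform (N1 + N2) u v = bform N1 u v + bform N2 u v.
Proof. by rewrite /bform mulmxDr mulmxDl mxE. Qed.

Lemma bformZm a N u v : bform (a *: N) u v = a * bform N u v.
Proof. by rewrite /bform -scalemxAr -scalemxAl mxE. Qed.

Lemma bform_sym N u v : N^T = N -> bform N u v = bform N v u.
Proof.
move=> sN; rewrite /bform -[in LHS](trmxK (u *m N *m v^T)) mxE.
by rewrite !trmx_mul trmxK sN mulmxA.
Qed.

Lemma bform_nondeg N u : N \in unitmx -> (forall v, bform N u v = 0) -> u = 0.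
Proof.
move=> NU u_perp; suff : u *m N = 0.
  by move=> /(congr1 (mulmx^~ (invmx N))); rewrite mulmxK // mul0mx.
apply/rowP => j; move: (u_perp (delta_mx 0 j)).
by rewrite /bform trmx_delta -colE mxE => ->; rewrite mxE.
Qed.

Lemma bform1_ge0 v : 0 <= bform 1%:M v v.
Proof.
rewrite /bform mulmx1 mxE; apply: sumr_ge0 => i _.
by rewrite mxE -expr2 sqr_ge0.
Qed.

End BilinearForm.

Section Lorentzian.
Variables (R : realType) (n : nat) (M : 'M[R]_n).
Hypothesis HM : lorentzian M.
Local Notation vec := 'rV[R]_n.

Lemma lorentzian_sym : M^T = M. Proof. by case: HM. Qed.

Let signature := \row_(i < n) (if val i == 0%N then -1 else 1 : R).
Let i0 := Ordinal (let: And3 n_gt0 _ _ := HM in n_gt0).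

Lemma lorentzian_det_lt0 : \det M < 0.
Proof.
case: HM => _ _ [P [_ PMP]].
have := congr1 determinant PMP; rewrite !det_mulmx det_tr det_diag.
rewrite (bigD1 i0) //= big1 => [|i /eqP ne]; last first.
  rewrite mxE ifF //; apply/negP => /eqP e; apply: ne; exact: val_inj.
rewrite mxE /= mulr1 => e.
have : \det P * \det P * \det M = -1 by rewrite -e; ring.
by move=> e2; nra.
Qed.

Lemma lorentzian_unit : M \in unitmx.
Proof. by rewrite unitmxE unitfE ltr0_neq0 // lorentzian_det_lt0. Qed.

Lemma lorentzian_coordinates : exists2 P : 'M[R]_n, P \in unitmx &
  forall u v, bform M u v =
    \sum_j (u *m invmx P) 0 j * signature 0 j * (v *m invmx P) 0 j.
Proof.
case: HM => _ _ [P [PU PMP]]; exists P => // u v.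
have eM : M = invmx P *m diag_mx signature *m (invmx P)^T.
  rewrite -PMP !mulmxA mulVmx // mul1mx -!mulmxA -trmx_mul mulVmx //.
  by rewrite trmx1 mulmx1.
rewrite /bform.
have -> : u *m M *m v^T =
    (u *m invmx P) *m diag_mx signature *m (v *m invmx P)^T.
  by rewrite eM trmx_mul !mulmxA.
by rewrite mxE; apply: eq_bigr => j _; rewrite mul_mx_diag !mxE.
Qed.

Lemma lorentzian_hyperplane_spacelike (P : 'M[R]_n) (z : vec) :
  P \in unitmx ->
  (forall u v, bform M u v =
    \sum_j (u *m invmx P) 0 j * signature 0 j * (v *m invmx P) 0 j) ->
  (z *m invmx P) 0 i0 = 0 -> 0 <= bform M z z /\ (bform M z z = 0 -> z = 0).
Proof.
move=> PU coordE z0.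
have sqE : bform M z z = \sum_j (z *m invmx P) 0 j ^+ 2.
  rewrite coordE; apply: eq_bigr => j _; rewrite /signature [X in _ * X * _]mxE.
  case: ifP => [/eqP j0|_]; last by rewrite mulr1 expr2.
  have -> : j = i0 by exact: val_inj.
  by rewrite z0 !mul0r expr2 mul0r.
rewrite sqE; split; first by apply: sumr_ge0 => j _; exact: sqr_ge0.
move=> sq0; suff : z *m invmx P = 0.
  by move=> /(congr1 (mulmx^~ P)); rewrite mulmxKV // mul0mx.
apply/rowP => j; rewrite [RHS]mxE.
have := psumr_eq0P (fun j _ => sqr_ge0 ((z *m invmx P) 0 j)) sq0 (i := j) isT.
by move/eqP; rewrite sqrf_eq0 => /eqP.
Qed.

Lemma lorentzian_orthogonal_timelike (x w : vec) : bform M x x < 0 ->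
  bform M x w = 0 -> bform M w w <= 0 -> w = 0.
Proof.
move=> x_time xw w_npos.
have [P PU coordE] := lorentzian_coordinates.
pose t (u : vec) := (u *m invmx P) 0 i0.
have tB a b (u v : vec) : t (a *: u - b *: v) = a * t u - b * t v.
  by rewrite /t mulmxBl -!scalemxAl !mxE.
have wx : bform M w x = 0 by rewrite bform_sym ?lorentzian_sym.
(* [z] is the combination of [x] and [w] killing the timelike coordinate. *)
set z := t w *: x - t x *: w.
have tz : t z = 0 by rewrite tB mulrC subrr.
have [z_nneg _] := lorentzian_hyperplane_spacelike PU coordE tz.
move: z_nneg; rewrite /z !(bformBl, bformBr, bformZl, bformZr) xw wx => z_nneg.
have tw0 : t w = 0.
  set a := t w in z_nneg *; set b := t x in z_nneg; set q := bform M x x in x_time z_nneg.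
  have : a ^+ 2 * q == 0.
    have aq_nneg : 0 <= a ^+ 2 * q by nra.
    by rewrite eq_le aq_nneg mulr_ge0_le0 ?sqr_ge0 ?ltW.
  by rewrite mulf_eq0 sqrf_eq0 (negbTE (ltr0_neq0 x_time)) orbF => /eqP.
have [w_nneg w_null] := lorentzian_hyperplane_spacelike PU coordE tw0.
by apply: w_null; apply/eqP; rewrite eq_le w_npos w_nneg.
Qed.

End Lorentzian.

Lemma horner_char_poly (R : comNzRingType) n (A : 'M[R]_n) x :
  (char_poly A).[x] = \det (x%:M - A).
Proof.
rewrite /char_poly /determinant horner_sum; apply: eq_bigr => s _.
rewrite hornerM horner_exp !hornerE; congr (_ * _).
rewrite (big_morph _ (fun p q => hornerM p q x) (hornerC 1 x)).
by apply: eq_bigr => i _; rewrite !mxE !(hornerE, hornerMn).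
Qed.

Lemma monic_root_gt0 (R : realType) (p : {poly R}) :
  p \is monic -> p.[0] < 0 -> exists2 c, 0 < c & root p c.
Proof.
move=> /monicP lc1 p0.
have [N hN] : exists N, forall x, N <= x -> lead_coef p <= p.[x].
  by apply: poly_pinfty_gt_lc; rewrite lc1.
pose b := Num.max N 0.
have pb : 0 <= p.[b] by apply: le_trans (hN _ _); rewrite ?lc1 ?le_max ?lexx.
have b_ge0 : 0 <= b by rewrite le_max lexx orbT.
have [|c /andP[c0 _] pc] := @poly_ivt _ p 0 b b_ge0; first by rewrite (ltW p0).
exists c => //; rewrite lt_neqAle c0 andbT; apply: contraTneq pc => <-.
by rewrite /root (ltr0_neq0 p0).
Qed.

Section Riemannian.
Variables (R : realType) (n : nat) (S : 'M[R]_n).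
Hypothesis HS : riemannian S.

Lemma riemannian_ge0 u : 0 <= bform S u u.
Proof.
case: HS => _ S_pos; have [->|u_neq0] := eqVneq u 0; first by rewrite bform0l.
exact: ltW (S_pos _ u_neq0).
Qed.

Lemma riemannian_shift_det_neq0 c : 0 <= c -> \det (c%:M + S) != 0.
Proof.
case: HS => _ S_pos c_ge0; apply/negP => /det0P [v v_neq0].
rewrite mulmxDr mul_mx_scalar => /eqP; rewrite addrC addr_eq0 => /eqP vS.
have := S_pos v v_neq0; have := bform1_ge0 v.
rewrite /bform vS mulNmx -scalemxAl mulmx1 !mxE; nra.
Qed.

Lemma riemannian_det_gt0 : 0 < \det S.
Proof.
have detE x : (char_poly (- S)).[x] = \det (x%:M + S).
  by rewrite horner_char_poly opprK.
have := riemannian_shift_det_neq0 (lexx 0); rewrite -scalemx1 scale0r add0r => S_neq0.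
rewrite lt_neqAle eq_sym S_neq0 /= leNgt; apply/negP => S_lt0.
have [|c c_gt0] := monic_root_gt0 (char_poly_monic (- S)).
  by rewrite detE -scalemx1 scale0r add0r.
by rewrite /root detE (negbTE (riemannian_shift_det_neq0 (ltW c_gt0))).
Qed.

Lemma riemannian_unit : S \in unitmx.
Proof. by rewrite unitmxE unitfE gt_eqF // riemannian_det_gt0. Qed.

(* [det (M S^-1) < 0] forces a negative eigenvalue of [M S^-1]. *)
Lemma generalized_eigen_neg (M : 'M[R]_n) : \det M < 0 ->
  exists c (e : 'rV[R]_n), [/\ 0 < c, e != 0 & e *m M = - c *: (e *m S)].
Proof.
move=> M_lt0; pose B := - (M *m invmx S).
have B0 : (char_poly B).[0] < 0.
  rewrite horner_char_poly -scalemx1 scale0r add0r opprK det_mulmx det_inv.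
  by rewrite pmulr_llt0 ?invr_gt0 ?riemannian_det_gt0.
have [c c_gt0] := monic_root_gt0 (char_poly_monic B) B0.
rewrite -eigenvalue_root_char => /eigenvalueP [e eB e_neq0].
exists c, e; split => //.
have := congr1 (mulmx^~ (- S)) eB.
rewrite /B !(mulmxN, mulNmx) !opprK mulmxA mulmxKV ?riemannian_unit // => ->.
by rewrite -scalemxAl scaleNr.
Qed.

End Riemannian.

Section LeviCivita.
Variables (R : realType) (n : nat).
Local Notation vec := 'rV[R]_n.
Variables (br prod : vec -> vec -> vec).
Hypothesis Hbr : lie_bracket br.

Lemma lie_bracketC u v : br v u = - br u v.
Proof.
case: Hbr => [[brZDl brZDr] br_alt _].
have brDl x y z : br (x + y) z = br x z + br y z.
  by have := brZDl 1 x y z; rewrite !scale1r.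
have brDr x y z : br x (y + z) = br x y + br x z.
  by have := brZDr 1 x y z; rewrite !scale1r.
have := br_alt (u + v); rewrite brDl !brDr !br_alt add0r addr0 => /eqP.
by rewrite addr_eq0 => /eqP ->; rewrite opprK.
Qed.

Lemma lie_bracketBl u v w : br (u - v) w = br u w - br v w.
Proof.
case: Hbr => [[brDl _] _ _]; have := brDl (-1) v u w.
by rewrite !scaleN1r addrC => ->; rewrite addrC.
Qed.

Lemma lie_bracketBr u v w : br w (u - v) = br w u - br w v.
Proof.
case: Hbr => [[_ brDr] _ _]; have := brDr (-1) w v u.
by rewrite !scaleN1r addrC => ->; rewrite addrC.
Qed.

Definition metric_product (N : 'M[R]_n) :=
  forall u v w, bform N (prod u v) w + bform N v (prod u w) = 0.

Definition torsion_free := forall u v, prod u v - prod v u = br u v.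

Section Metric.
Variable N : 'M[R]_n.
Hypothesis sN : N^T = N.

Lemma levi_civita_metric : levi_civita N br prod -> metric_product N.
Proof.
move=> lc u v w; have := lc u v w; have := lc u w v.
rewrite (lie_bracketC w u) (lie_bracketC v w) (lie_bracketC u v) !bformNl.
rewrite (bform_sym v (prod u w)) //; lra.
Qed.

Lemma levi_civita_torsion_free :
  N \in unitmx -> levi_civita N br prod -> torsion_free.
Proof.
move=> NU lc u v; apply/eqP; rewrite -subr_eq0; apply/eqP.
apply: (bform_nondeg NU) => w; have := lc u v w; have := lc v u w.
rewrite (lie_bracketC u v) (lie_bracketC w u) (lie_bracketC v w) !bformNl.
rewrite !bformBl; lra.
Qed.

(* Koszul's formula, read backwards. *)
Lemma levi_civita_of_metric :
  torsion_free -> metric_product N -> levi_civita N br prod.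
Proof.
move=> tor met u v w; rewrite -!tor !bformBl.
have := met u v w; have := met v u w; have := met w u v; have := met v w u.
have := met w v u; have := met u w v.
rewrite !(bform_sym _ u) // !(bform_sym _ v) // !(bform_sym _ w) //; lra.
Qed.

Lemma levi_civita_Bl : N \in unitmx -> levi_civita N br prod ->
  forall u v w, prod (u - v) w = prod u w - prod v w.
Proof.
move=> NU lc u v w; apply/eqP; rewrite -subr_eq0; apply/eqP.
apply: (bform_nondeg NU) => z.
have := lc (u - v) w z; have := lc u w z; have := lc v w z.
rewrite lie_bracketBl lie_bracketBr !bformBl bformBr; lra.
Qed.

Lemma metric_orthogonal_self u X :
  metric_product N -> bform N (prod u X) X = 0.
Proof. by move=> met; have := met u X X; rewrite (bform_sym X (prod u X)) //; lra. Qed.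

Lemma parallel_killing X :
  torsion_free -> metric_product N -> (forall u, prod u X = 0) ->
  killing N br X.
Proof. by move=> tor met X_par u v; rewrite -!tor !X_par !subr0 met. Qed.

End Metric.
End LeviCivita.

Section FlatKilling.
Variables (R : realType) (n : nat).
Local Notation vec := 'rV[R]_n.
Variables (br prod : vec -> vec -> vec) (N : 'M[R]_n) (X : vec).
Hypotheses (Hbr : lie_bracket br) (sN : N^T = N) (NU : N \in unitmx).
Hypotheses (lcN : levi_civita N br prod) (flat : flat_product br prod).
Hypothesis kX : killing N br X.

Let met := levi_civita_metric Hbr sN lcN.
Let tor := levi_civita_torsion_free Hbr NU lcN.

Lemma killing_covariant_skew u v :
  bform N (prod u X) v + bform N u (prod v X) = 0.
Proof. by have := kX u v; rewrite -!tor !bformBl !bformBr; have := met X u v; lra. Qed.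

Definition hessian v w := prod v (prod w X) - prod (prod v w) X.

Lemma hessianC v w : hessian v w = hessian w v.
Proof.
have := flat v w X; rewrite -tor (levi_civita_Bl Hbr NU lcN) /hessian => e.
rewrite -[prod v (prod w X)](subrK (prod w (prod v X))) e.
by rewrite addrAC (addrAC (prod (prod v w) X)) subrr add0r addrC.
Qed.

Lemma hessian_skew v w z : bform N (hessian v w) z = - bform N (hessian v z) w.
Proof.
rewrite /hessian !bformBl.
have := met v (prod w X) z; have := killing_covariant_skew w (prod v z).
have := killing_covariant_skew (prod v w) z; have := met v w (prod z X).
rewrite (bform_sym (prod v (prod z X))) // (bform_sym (prod (prod v z) X)) //.
lra.
Qed.

(* Symmetric in the first two arguments, skew in the last two. *)
Lemma hessian_eq0 v w : hessian v w = 0.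
Proof.
apply: (bform_nondeg NU) => z.
have := hessian_skew v w z; have := hessian_skew z v w.
have := hessian_skew w z v; rewrite (hessianC v z) (hessianC z w) (hessianC w v).
lra.
Qed.

Lemma killing_covariant_null u : bform N (prod u X) (prod u X) = 0.
Proof.
have prodXX : prod X X = 0.
  apply: (bform_nondeg NU) => v; rewrite bform_sym //.
  by have := killing_covariant_skew v X; rewrite (metric_orthogonal_self sN v X met); lra.
have := met u X (prod u X); have /eqP := hessian_eq0 u u.
rewrite subr_eq0 => /eqP ->; have := killing_covariant_skew (prod u u) X.
by rewrite prodXX bform_sym // (bform_sym X) // bform0r; lra.
Qed.

End FlatKilling.

Section Flip.
Variables (R : realType) (n : nat).
Local Notation vec := 'rV[R]_n.

Definition flip_metric (N : 'M[R]_n) (X : vec) : 'M[R]_n :=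
  N - (2 / bform N X X) *: (N *m X^T *m X *m N).

Lemma bform_flip N X u v : bform (flip_metric N X) u v =
  bform N u v - 2 / bform N X X * (bform N u X * bform N X v).
Proof.
rewrite /flip_metric -scaleNr bformDm bformZm mulNr; congr (_ - _ * _); rewrite /bform.
have -> : u *m (N *m X^T *m X *m N) *m v^T = (u *m N *m X^T) *m (X *m N *m v^T).
  by rewrite !mulmxA.
by rewrite [in LHS]mxE big_ord1.
Qed.

Lemma flip_metric_sym N X : N^T = N -> (flip_metric N X)^T = flip_metric N X.
Proof. by move=> sN; rewrite linearB linearZ /= !trmx_mul trmxK sN !mulmxA. Qed.

Lemma flip_metric_riemannian M X :
  lorentzian M -> timelike M X -> riemannian (flip_metric M X).
Proof.
move=> HM X_time; have sM := lorentzian_sym HM.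
split=> [|u u_neq0]; first exact: flip_metric_sym.
have m_lt0 : bform M X X < 0 := X_time.
set m := bform M X X in m_lt0 *; have m_neq0 : m != 0 by rewrite ltr0_neq0.
pose a := bform M u X / m; pose w := u - a *: X.
have wX : bform M w X = 0 by rewrite bformBl bformZl /a -/m divfK // subrr.
have Xw : bform M X w = 0 by rewrite bform_sym.
have uE : u = w + a *: X by rewrite /w subrK.
clearbody w a.
rewrite uE bform_flip !(bformDl, bformDr, bformZl, bformZr) wX Xw -/m !add0r.
have -> : 2 / m * (a * m * (a * m)) = 2 * (a * a * m) by field.
have aa_ge0 : 0 <= a * a by rewrite -expr2 sqr_ge0.
have [w0|w_neq0] := eqVneq w 0.
  have a_neq0 : a != 0.
    by apply: contraNneq u_neq0 => a0; rewrite uE w0 a0 scale0r addr0.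
  have : 0 < a * a by rewrite lt0r mulf_neq0.
  by rewrite w0 bform0l; nra.
have w_gt0 : 0 < bform M w w.
  rewrite ltNge; apply/negP => w_npos; move/eqP: w_neq0; apply.
  exact: (lorentzian_orthogonal_timelike HM m_lt0 Xw w_npos).
by nra.
Qed.

Lemma flip_metric_product (prod : vec -> vec -> vec) N X : N^T = N ->
  metric_product prod N -> (forall u, prod u X = 0) ->
  metric_product prod (flip_metric N X).
Proof.
move=> sN met X_par u v w; rewrite !bform_flip.
have := met u v X; have := met u w X; rewrite !X_par !bform0r !addr0.
by rewrite (bform_sym X (prod u w)) // => -> ->; rewrite !mul0r !mulr0 !subr0.
Qed.

End Flip.


Section FlatLorentzian.
Variables (R : realType) (n : nat).
Local Notation vec := 'rV[R]_n.
Variables (br prod : vec -> vec -> vec) (M : 'M[R]_n).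
Hypotheses (Hbr : lie_bracket br) (HM : lorentzian M).
Hypothesis lcM : levi_civita M br prod.

Let sM := lorentzian_sym HM.
Let metM := levi_civita_metric Hbr sM lcM.

Lemma timelike_killing_parallel X : flat_product br prod ->
  timelike M X -> killing M br X -> forall u, prod u X = 0.
Proof.
move=> flat X_time kX u; apply: (lorentzian_orthogonal_timelike HM X_time).
  by rewrite bform_sym // (metric_orthogonal_self sM u X metM).
by rewrite (killing_covariant_null Hbr sM (lorentzian_unit HM) lcM flat kX).
Qed.

Lemma riemannian_levi_civita_parallel S :
  riemannian S -> levi_civita S br prod ->
  exists2 X, timelike M X & forall u, prod u X = 0.
Proof.
move=> HS lcS; have metS := levi_civita_metric Hbr HS.1 lcS.
have [c [e [c_gt0 e_neq0 eM]]] :=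
  generalized_eigen_neg HS (lorentzian_det_lt0 HM).
have bformMe z : bform M e z = - c * bform S e z.
  by rewrite /bform eM -scalemxAl mxE.
(* Both metrics make the product skew, so [M = - c S] also holds on [prod u e]. *)
have bformM_prod u z : bform M (prod u e) z = - c * bform S (prod u e) z.
  have -> : bform M (prod u e) z = - bform M e (prod u z).
    by have := metM u e z; lra.
  have SE : bform S e (prod u z) = - bform S (prod u e) z.
    by have := metS u e z; lra.
  by rewrite bformMe SE mulrN mulNr opprK.
have e_time : timelike M e.
  by rewrite /timelike bformMe; have := HS.2 e e_neq0; nra.
exists e => // u; apply: (lorentzian_orthogonal_timelike HM e_time).
  by rewrite bform_sym // (metric_orthogonal_self sM u e metM).
by rewrite bformM_prod; have := riemannian_ge0 HS (prod u e); nra.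
Qed.

End FlatLorentzian.

Theorem corollary1p3 (R : realType) (n : nat)
  (br : 'rV[R]_n -> 'rV[R]_n -> 'rV[R]_n) (M : 'M[R]_n)
  (prod : 'rV[R]_n -> 'rV[R]_n -> 'rV[R]_n) :
  lie_bracket br -> lorentzian M -> levi_civita M br prod ->
  flat_product br prod ->
  ((exists X : 'rV[R]_n, timelike M X /\ killing M br X) <->
   (exists S : 'M[R]_n, riemannian S /\ levi_civita S br prod)).
Proof.
move=> Hbr HM lcM flat; have sM := lorentzian_sym HM.
have metM := levi_civita_metric Hbr sM lcM.
have tor := levi_civita_torsion_free Hbr (lorentzian_unit HM) lcM.
split=> [[X [X_time kX]] | [S [HS lcS]]].
- have X_par := timelike_killing_parallel Hbr HM lcM flat X_time kX.
  exists (flip_metric M X); split; first exact: flip_metric_riemannian.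
  apply: levi_civita_of_metric (flip_metric_sym X sM) tor _.
  exact: flip_metric_product.
- have [X X_time X_par] := riemannian_levi_civita_parallel Hbr HM lcM HS lcS.
  by exists X; split; last exact: parallel_killing tor metM X_par.
Qed.
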